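(* Let $p$ be an odd prime, let $F_{X_2}$ be the fusion matrix of the simple object $X_2$ of $\operatorname{PSU}(2)_{p-2}$ (with respect to the ordered basis $X_0,X_2,\dots,X_{p-3}$), and let $T_{X_2}$ be the linear operator on $\frac{p-1}{2}\times\frac{p-1}{2}$ real matrices given by $T_{X_2}(A)=F_{X_2}^{-1}AF_{X_2}$. Then $T_{X_2}$ has no eigenvector with eigenvalue $-1$.
   Context: $\operatorname{PSU}(2)_{p-2}$ is the fusion category with simple objects $X_{2j}$, $0\le j\le\frac{p-3}{2}$, $X_0=\mathbf 1$, and fusion rules $X_{2i}\otimes X_{2j}\cong\bigoplus_m N_{2i,2j}^{2m}X_{2m}$ with $N_{2i,2j}^{2m}=1$ if $|2i-2j|\le2m\le\min\{2i+2j,2(p-2)-2i-2j\}$ and $0$ otherwise. The fusion matrix $F_{X_2}$ has $(m,i)$ entry $N_{2,2i}^{2m}$ (multiplicity of $X_{2m}$ in $X_2\otimes X_{2i}$); it is the symmetric tridiagonal matrix with $0$ in position $(1,1)$, $1$ on the rest of the diagonal, and $1$ on the sub- and super-diagonals, and it is invertible. *)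

From HB Require Import structures.
From mathcomp Require Import all_boot all_order all_algebra.
From mathcomp Require Import reals.
Set Implicit Arguments. Unset Strict Implicit. Unset Printing Implicit Defensive.
Import Order.TTheory GRing.Theory Num.Theory.
Local Open Scope ring_scope.

(* Fusion coefficient N_{2i,2j}^{2m} of PSU(2)_{p-2} (labels X_{2i}):
   1 iff |2i-2j| <= 2m <= min(2i+2j, 2(p-2)-2i-2j). The absolute value
   |2i-2j| <= 2m is written as the conjunction of the two truncated
   differences. *)
Definition psu2_N (p i j m : nat) : bool :=
  [&& (2 * i - 2 * j <= 2 * m)%N, (2 * j - 2 * i <= 2 * m)%N
    & (2 * m <= minn (2 * i + 2 * j) (2 * (p - 2) - 2 * i - 2 * j))%N].

Definition psu2_rank (p : nat) : nat := (p - 1)./2.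

Definition fusion_mx_X2 (R : realType) (p : nat) : 'M[R]_(psu2_rank p) :=
  \matrix_(m, i) ((psu2_N p 1 i m : nat)%:R).

Definition T_X2 (R : realType) (p : nat) (A : 'M[R]_(psu2_rank p)) :
  'M[R]_(psu2_rank p) :=
  invmx (fusion_mx_X2 R p) *m A *m fusion_mx_X2 R p.

(* Reduce modulo p.  Over a field of characteristic p the matrix G = F - 3 is
   nilpotent: G^j e_0 is the column of signed binomials
   (-1)^(j+m) C(2j+1, j+m+1), which vanishes for 2j+1 = p, and e_0 is a cyclic
   vector for F, which commutes with G.  So for p > 3, F = G + 3 is invertible
   mod p, and A F + F A = 0 forces A = 0 there, since it rewrites as
   A G = -(G + 6) A, whence (G + 6)^n A = +-A G^n = 0 for n = (p-1)/2.
   Both facts are the nonvanishing mod p of integer determinants (of F and of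
   A |-> A F + F A), so they hold over the reals as well; and T A = -A with F
   invertible means exactly A F + F A = 0. *)

From HB Require Import structures.
From mathcomp Require Import all_boot all_order all_algebra.
From mathcomp Require Import reals.
From mathcomp Require Import zify ring.
Import Order.TTheory GRing.Theory Num.Theory.
Local Open Scope ring_scope.
Set Implicit Arguments. Unset Strict Implicit. Unset Printing Implicit Defensive.

Lemma odd_psu2_rank p : odd p -> p = (psu2_rank p).*2.+1.
Proof.
rewrite /psu2_rank => p_odd.
have def_p : p = (p./2).*2.+1 by rewrite -[in LHS](odd_double_half p) p_odd.
by rewrite [in (p - 1)%N]def_p subn1 /= doubleK -def_p.
Qed.

Lemma psu2_N_X2 p i m : odd p -> (i < psu2_rank p)%N -> (m < psu2_rank p)%N ->
  psu2_N p 1 i m = [|| i == m.+1, i.+1 == m | (i == m) && (0 < m)%N].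
Proof.
move=> /odd_psu2_rank; move: (psu2_rank p) => n def_p lt_i_n lt_m_n.
rewrite /psu2_N def_p leq_min -!muln2; clear def_p.
apply/and4P/idP => [[? ? ? ?] | Nim]; first lia.
by split; move: Nim; lia.
Qed.

Lemma sum_ord_eq_natr (S : nzRingType) n (f : nat -> S) k :
  \sum_(i < n) (i == k :> nat)%:R * f i = if (k < n)%N then f k else 0.
Proof.
rewrite -(big_ord1_eq (@GRing.add S) f) [RHS]big_mkcond /=; apply: eq_bigr => i _.
by case: (_ == _); rewrite ?mul1r ?mul0r.
Qed.

Lemma binS2 a k : 'C(a.+2, k.+2) = ('C(a, k) + 2 * 'C(a, k.+1) + 'C(a, k.+2))%N.
Proof. rewrite !binS; lia. Qed.

Section IterMulmx.
Variables (R : pzRingType) (n : nat) (G : 'M[R]_n).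

Lemma iter_mulmx k q (X : 'M_(n, q)) :
  iter k (mulmx G) X = iter k (mulmx G) 1%:M *m X.
Proof. by elim: k => [|k IHk] /=; rewrite ?mul1mx // IHk mulmxA. Qed.

Lemma iter_mulmx_comm k (F : 'M_n) : G *m F = F *m G ->
  iter k (mulmx G) 1%:M *m F = F *m iter k (mulmx G) 1%:M.
Proof.
move=> GF; elim: k => [|k IHk] /=; first by rewrite mul1mx mulmx1.
by rewrite -mulmxA IHk !mulmxA GF.
Qed.

End IterMulmx.

Section NilpotentMx.
Variables (K : fieldType) (n : nat) (G : 'M[K]_n) (k : nat).
Hypothesis G_nil : iter k (mulmx G) 1%:M = 0.

Lemma nilpotent_add_scalar_mulmx_eq0 c q (X : 'M_(n, q)) :
  c != 0 -> (G + c%:M) *m X = 0 -> X = 0.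
Proof.
move=> c_neq0 /eqP; rewrite mulmxDl addr_eq0 mul_scalar_mx -scaleNr => /eqP GX.
have iterGX j : iter j (mulmx G) X = (- c) ^+ j *: X.
  elim: j => [|j IHj] /=; first by rewrite scale1r.
  by rewrite IHj -scalemxAr GX scalerA exprSr.
apply/eqP; move: (iterGX k); rewrite iter_mulmx G_nil mul0mx => /esym/eqP.
by rewrite scaler_eq0 expf_eq0 oppr_eq0 (negbTE c_neq0) andbF.
Qed.

Lemma nilpotent_add_scalar_unitmx c : c != 0 -> G + c%:M \in unitmx.
Proof.
move=> c_neq0; rewrite -unitmx_tr -row_free_unit; apply/inj_row_free => v.
move=> /(congr1 trmx); rewrite trmx_mul trmxK trmx0.
move=> /(nilpotent_add_scalar_mulmx_eq0 c_neq0) /(congr1 trmx).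
by rewrite trmxK trmx0.
Qed.

Lemma nilpotent_anticomm_eq0 c (A : 'M_n) : c *+ 2 != 0 ->
  A *m (G + c%:M) + (G + c%:M) *m A = 0 -> A = 0.
Proof.
move=> c2_neq0 anticommA.
set H := G + (c *+ 2)%:M.
have AG : A *m G = - H *m A.
  apply/eqP; rewrite mulNmx -addr_eq0; apply/eqP; rewrite -[RHS]anticommA.
  rewrite /H !mulmxDl !mulmxDr mul_mx_scalar !mul_scalar_mx.
  by rewrite -scalerMnl mulr2n addrA [RHS]addrACA.
have iterAG j : A *m iter j (mulmx G) 1%:M = iter j (mulmx (- H)) A.
  elim: j => [|j IHj] /=; first by rewrite mulmx1.
  by rewrite mulmxA AG -mulmxA IHj.
have H_inj q (X : 'M_(n, q)) : - H *m X = 0 -> X = 0.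
  rewrite mulNmx => /eqP; rewrite oppr_eq0 => /eqP.
  exact: nilpotent_add_scalar_mulmx_eq0.
have peel j : iter j (mulmx (- H)) A = 0 -> A = 0.
  by elim: j => [|j IHj] //= /H_inj.
by apply: (peel k); rewrite -iterAG G_nil mulmx0.
Qed.

End NilpotentMx.

Definition fusion_mx (S : nzRingType) (p : nat) : 'M[S]_(psu2_rank p) :=
  \matrix_(m, i) (psu2_N p 1 i m)%:R.

Section FusionMatrix.
Variables (S : comNzRingType) (p : nat).
Hypotheses (p_odd : odd p) (p_gt1 : (1 < p)%N).
Local Notation n := (psu2_rank p).
Local Notation F := (fusion_mx S p).

Definition natcol (f : nat -> S) : 'cV[S]_n := \col_i f i.

Lemma fusion_mxE (m i : 'I_n) : F m i =
  (i == m.+1 :> nat)%:R + (0 < m)%N%:R * ((i == m.-1 :> nat)%:R + (i == m :> nat)%:R).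
Proof.
rewrite mxE (psu2_N_X2 p_odd (ltn_ord i) (ltn_ord m)) -!(natrD, natrM).
by congr _%:R; lia.
Qed.

Lemma mul_fusion_natcol f : f n = 0 ->
  F *m natcol f = natcol (fun m => f m.+1 + if m is m'.+1 then f m' + f m else 0).
Proof.
move=> fn0; apply/colP => m; rewrite !mxE.
under eq_bigr => i _ do rewrite fusion_mxE mxE mulrDl -mulrA mulrDl.
rewrite big_split -big_distrr big_split /= !sum_ord_eq_natr.
have -> : (if (m.+1 < n)%N then f m.+1 else 0) = f m.+1.
  by case: ltnP => // le_n_m1; rewrite -fn0; congr f; have := ltn_ord m; lia.
case: m => [[|m] lt_m_n] /=; first by rewrite mul0r addr0.
by rewrite (ltnW lt_m_n) lt_m_n mul1r.
Qed.

Definition unit_natcol k := natcol (fun i => (i == k)%:R).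

Lemma fusion_mx_unit_natcol0 : F *m unit_natcol 0 = unit_natcol 1.
Proof.
have n_gt0 : (0 < n)%N by have := odd_psu2_rank p_odd; lia.
rewrite mul_fusion_natcol; last by rewrite eqn0Ngt n_gt0.
by apply/colP => -[[|[|m]] lt_m_n]; rewrite !mxE /= ?add0r ?addr0.
Qed.

Lemma fusion_mx_unit_natcolS k : (k.+1 < n)%N ->
  F *m unit_natcol k.+1 = unit_natcol k + unit_natcol k.+1 + unit_natcol k.+2.
Proof.
move=> lt_k1_n; rewrite mul_fusion_natcol; last by rewrite eqn_leq leqNgt lt_k1_n.
apply/colP => -[[|m] lt_m_n]; rewrite !mxE /= ?addr0 -?natrD.
all: by congr _%:R; lia.
Qed.

Lemma unit_natcol_ge k : (n <= k)%N -> unit_natcol k = 0.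
Proof.
move=> le_n_k; apply/colP => i; rewrite !mxE.
by case: eqP => // eq_i_k; have := ltn_ord i; lia.
Qed.

Lemma comm_fusion_mx_eq0 (M : 'M[S]_n) :
  M *m F = F *m M -> M *m unit_natcol 0 = 0 -> M = 0.
Proof.
move=> MF Me0.
have Me k : M *m unit_natcol k = 0 /\ M *m unit_natcol k.+1 = 0.
  elim: k => [|k [Mek MekS]].
    by rewrite -fusion_mx_unit_natcol0 mulmxA MF -mulmxA Me0 mulmx0.
  split=> //; case: (ltnP k.+1 n) => [lt_k1_n | le_n_k1]; last first.
    by rewrite unit_natcol_ge ?mulmx0 // ltnW.
  move: (congr1 (mulmx M) (fusion_mx_unit_natcolS lt_k1_n)).
  by rewrite mulmxA MF -mulmxA MekS mulmx0 !mulmxDr Mek MekS !add0r.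
apply/matrixP => a b; have := (Me b).1.
have -> : unit_natcol b = delta_mx b 0 by apply/colP => i; rewrite !mxE andbT.
by rewrite -colE => /colP/(_ a); rewrite !mxE.
Qed.

Definition binomial_natcol j :=
  natcol (fun m => (-1) ^+ (j + m) * 'C(j.*2.+1, j + m.+1)%:R).

Lemma binomial_natcol0 : binomial_natcol 0 = unit_natcol 0.
Proof.
by apply/colP => -[[|m] lt_m_n]; rewrite !mxE /= ?bin1 ?bin_small ?mulr0 ?mul1r.
Qed.

Lemma sub3_binomial_natcol j : (j < n)%N ->
  (F - 3%:M) *m binomial_natcol j = binomial_natcol j.+1.
Proof.
move=> lt_j_n; rewrite mulmxBl mul_scalar_mx mul_fusion_natcol; last first.
  by rewrite bin_small ?mulr0 //; lia.
apply/colP => -[[|m] lt_m_n]; rewrite !mxE /=.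
  have sym : 'C(j.*2.+1, j) = 'C(j.*2.+1, j.+1).
    by rewrite -[in RHS]bin_sub; [congr binomial; lia | lia].
  rewrite !addn0 !addn1 addn2 doubleS binS2 sym !exprS natrD natrD natrM; ring.
rewrite !(addnS, addSn) doubleS binS2 !exprS natrD natrD natrM; ring.
Qed.

Lemma iter_sub3_unit_natcol0 j : (j <= n)%N ->
  iter j (mulmx (F - 3%:M)) (unit_natcol 0) = binomial_natcol j.
Proof.
elim: j => [|j IHj] le_j1_n /=; first by rewrite binomial_natcol0.
by rewrite IHj ?sub3_binomial_natcol // ltnW.
Qed.

Hypothesis p_char : p \in [pchar S].

Lemma binomial_natcol_rank : binomial_natcol n = 0.
Proof.
apply/colP => m; rewrite !mxE -(odd_psu2_rank p_odd).
rewrite (bin_lt_pcharf_0 p_char) ?mulr0 //.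
by have := ltn_ord m; have := odd_psu2_rank p_odd; lia.
Qed.

Lemma fusion_mx_sub3_nilpotent : iter n (mulmx (F - 3%:M)) 1%:M = 0.
Proof.
apply: comm_fusion_mx_eq0.
  by apply: iter_mulmx_comm; rewrite mulmxBl mulmxBr scalar_mxC.
by rewrite -iter_mulmx iter_sub3_unit_natcol0 // binomial_natcol_rank.
Qed.

End FusionMatrix.

Lemma map_fusion_mx (S S' : nzRingType) (f : {rmorphism S -> S'}) p :
  map_mx f (fusion_mx S p) = fusion_mx S' p.
Proof. by apply/matrixP => i j; rewrite !mxE rmorph_nat. Qed.

Section Anticommutator.
Variables (R : comNzRingType) (n : nat).

Definition anticomm_mx (F : 'M[R]_n) : 'M_(n * n) := lin_mulmxr F + lin_mulmx F.

Lemma mul_mxvec_anticomm_mx (F A : 'M_n) :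
  mxvec A *m anticomm_mx F = mxvec (A *m F + F *m A).
Proof. by rewrite mulmxDr !mul_vec_lin linearD. Qed.

End Anticommutator.

Lemma map_anticomm_mx (R R' : comNzRingType) n (f : {rmorphism R -> R'}) (F : 'M_n) :
  map_mx f (anticomm_mx F) = anticomm_mx (map_mx f F).
Proof.
rewrite map_mxD (map_lin_mx (f := f) (gf := mulmxr (map_mx f F))) => [|A]; last first.
  by rewrite /= map_mxM.
by rewrite (map_lin_mx (f := f) (gf := mulmx (map_mx f F))) // => A; rewrite /= map_mxM.
Qed.

Lemma anticomm_mx_unitmxP (K : fieldType) n (F : 'M[K]_n) :
  reflect (forall A, A *m F + F *m A = 0 -> A = 0) (anticomm_mx F \in unitmx).
Proof.
rewrite -row_free_unit; apply: (iffP idP) => [/row_free_inj injK A anti | injK].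
  apply/eqP; rewrite -mxvec_eq0; apply/eqP/injK.
  by rewrite /= mul_mxvec_anticomm_mx anti !linear0 mul0mx.
apply: inj_row_free => v; rewrite -(vec_mxK v) mul_mxvec_anticomm_mx.
by move=> /eqP; rewrite mxvec_eq0 => /eqP/injK ->; rewrite linear0.
Qed.

Lemma conj_eq_opp_anticomm (K : comUnitRingType) n (F A : 'M[K]_n) :
  F \in unitmx -> invmx F *m A *m F = - A -> A *m F + F *m A = 0.
Proof.
move=> F_unit conjA; rewrite -[A *m F](mulKVmx F_unit) [invmx F *m _]mulmxA conjA.
by rewrite mulmxN addNr.
Qed.

Lemma map_intr_unitmx (K : fieldType) (R : numFieldType) n (M : 'M[int]_n) :
  map_mx (intr : int -> K) M \in unitmx -> map_mx (intr : int -> R) M \in unitmx.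
Proof.
rewrite !unitmxE !unitfE !det_map_mx intr_eq0.
by apply: contra => /eqP ->; rewrite rmorph0.
Qed.

Section FusionMatrixPchar.
Variables (K : fieldType) (p : nat).
Hypotheses (p_odd : odd p) (p_gt3 : (3 < p)%N) (p_char : p \in [pchar K]).

Let natr_neq0 k : (0 < k < p)%N -> k%:R != 0 :> K.
Proof. by rewrite -(dvdn_pcharf p_char) => /andP [k_gt0 lt_k_p]; rewrite gtnNdvd. Qed.

Let fusion_mx_nil := fusion_mx_sub3_nilpotent p_odd (ltnW (ltnW p_gt3)) p_char.

Lemma fusion_mx_pchar_unitmx : fusion_mx K p \in unitmx.
Proof.
rewrite -(subrK 3%:M (fusion_mx K p)) (nilpotent_add_scalar_unitmx fusion_mx_nil) //.
by rewrite natr_neq0 // p_gt3.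
Qed.

Lemma anticomm_fusion_mx_pchar_unitmx : anticomm_mx (fusion_mx K p) \in unitmx.
Proof.
apply/anticomm_mx_unitmxP => A; rewrite -(subrK 3%:M (fusion_mx K p)).
apply: (nilpotent_anticomm_eq0 fusion_mx_nil).
by rewrite -mulrnA natrM; apply: mulf_neq0; apply: natr_neq0; lia.
Qed.

End FusionMatrixPchar.

Theorem mainTheorem19 (R : realType) (p : nat) (hp : prime p) (hodd : odd p) :
  ~ (exists A : 'M[R]_(psu2_rank p), A != 0 /\ @T_X2 R p A = (-1) *: A).
Proof.
move=> [A [A_neq0 TA]]; rewrite scaleN1r in TA.
have [p3 | p_gt3] : p = 3%N \/ (3 < p)%N by have := prime_gt1 hp; lia.
  (* F is the 1x1 zero matrix, and invmx returns non-invertible matrices unchanged. *)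
  subst p; have F0 : fusion_mx_X2 R 3 = 0 by apply/matrixP => i j; rewrite !mxE !ord1.
  by move: TA A_neq0; rewrite /T_X2 F0 mulmx0 => /esym/eqP; rewrite oppr_eq0 => ->.
have pchar_p := pchar_Fp hp.
have FR : fusion_mx_X2 R p = map_mx intr (fusion_mx int p) by rewrite map_fusion_mx.
have F_unit : fusion_mx_X2 R p \in unitmx.
  rewrite FR; apply: (@map_intr_unitmx 'F_p).
  by rewrite map_fusion_mx fusion_mx_pchar_unitmx.
have /anticomm_mx_unitmxP anti_inj : anticomm_mx (fusion_mx_X2 R p) \in unitmx.
  rewrite FR -map_anticomm_mx; apply: (@map_intr_unitmx 'F_p).
  by rewrite map_anticomm_mx map_fusion_mx anticomm_fusion_mx_pchar_unitmx.
by rewrite (anti_inj A (conj_eq_opp_anticomm F_unit TA)) eqxx in A_neq0.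
Qed.
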